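(* Suppose $n/N\to\lambda$ as $\nu\to\infty$ with $0\le\lambda<1$. Then $n\gamma\to c$ as $\nu\to\infty$ for some $c\ge1-\lambda>0$.
   Context: For a sequence of population sizes $N=N_\nu$ and sample sizes $n=n_\nu<N$ with $N,n\to\infty$, let $N_1,\dots,N_n$ be the group sizes of the RHC design: $N_i=N/n$ for all $i$ if $N/n$ is an integer; otherwise $N_i=\lfloor N/n\rfloor$ for $i=1,\dots,k$ and $N_i=\lfloor N/n\rfloor+1$ for $i=k+1,\dots,n$, with $k$ such that $\sum_{i=1}^nN_i=N$. Define $\gamma=\sum_{i=1}^nN_i(N_i-1)/(N(N-1))$. *)

From HB Require Import structures.
From mathcomp Require Import all_boot all_order all_algebra.
From mathcomp Require Import all_classical all_reals all_analysis.
Set Implicit Arguments. Unset Strict Implicit. Unset Printing Implicit Defensive.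
Import Order.TTheory GRing.Theory Num.Theory.
Local Open Scope ring_scope.

(* RHC group sizes, indexed 0-based by i : 'I_n (paper's group i+1). *)
Definition rhc_k (N n : nat) : nat := (n - N %% n)%N.

Definition rhc_size (N n : nat) (i : nat) : nat :=
  if (n %| N)%N then (N %/ n)%N
  else (N %/ n + (rhc_k N n <= i))%N.

Definition rhc_gamma {R : realType} (N n : nat) : R :=
  (\sum_(i < n) ((rhc_size N n i) * (rhc_size N n i - 1))%N%:R)
    / ((N * (N - 1))%N%:R).

(* Write N = q n + r with 0 <= r < n.  The RHC design has n - r groups of size q
   and r of size q + 1, so n * sum_i N_i (N_i - 1) = N (N - n) + r (n - r), i.e.
     n gamma = (1 - b + b^2 h(1/b)) / (1 - 1/N),   b = n/N,
   where h x = {x} (1 - {x}) and {x} is the fractional part (note {N/n} = r/n).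
   Since h is 1-Lipschitz and 0 <= h <= 1, b^2 h(1/b) converges to
   lambda^2 h(1/lambda) when lambda > 0 and to 0 when lambda = 0, so
   n gamma --> 1 - lambda + lambda^2 h(1/lambda) >= 1 - lambda. *)

From HB Require Import structures.
From mathcomp Require Import all_boot all_order all_algebra.
From mathcomp Require Import all_classical all_reals all_analysis.
From mathcomp Require Import zify ring lra.
Import Order.TTheory GRing.Theory Num.Theory numFieldNormedType.Exports.
Local Open Scope classical_set_scope.
Local Open Scope ring_scope.

Lemma sum_rhc_size (N n : nat) : (0 < n)%N ->
  (\sum_(i < n) rhc_size N n i * (rhc_size N n i - 1))%N =
  ((n - N %% n) * (N %/ n * (N %/ n - 1)) + N %% n * ((N %/ n + 1) * (N %/ n)))%N.
Proof.
move=> n_gt0; rewrite /rhc_size.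
have [dvd_nN|ndvd_nN] := boolP (n %| N)%N; rewrite ?dvd_nN ?(negbTE ndvd_nN).
  by rewrite (eqP dvd_nN) sum_nat_const card_ord subn0 mul0n addn0.
have k_le_n : (rhc_k N n <= n)%N by rewrite leq_subr.
rewrite -(big_mkord xpredT (fun i => (N %/ n + (rhc_k N n <= i)) *
                                     (N %/ n + (rhc_k N n <= i) - 1)))%N.
rewrite (@big_cat_nat _ _ _ (rhc_k N n) 0 n) /= ?leq0n //.
rewrite (eq_big_nat _ _ (F2 := fun=> N %/ n * (N %/ n - 1))%N); last first.
  by move=> i /andP[_ lt_ik]; rewrite leqNgt lt_ik addn0.
rewrite [X in (_ + X)%N](eq_big_nat _ _ (F2 := fun=> (N %/ n + 1) * (N %/ n))%N);
  last by move=> i /andP[le_ki _]; rewrite le_ki addnK.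
by rewrite !sum_nat_const_nat /rhc_k subn0 subKn // ltnW // ltn_mod.
Qed.

Lemma muln_sum_rhc_size (N n : nat) : (0 < n)%N -> (n <= N)%N ->
  (n * \sum_(i < n) rhc_size N n i * (rhc_size N n i - 1))%N =
  (N * (N - n) + N %% n * (n - N %% n))%N.
Proof.
move=> n_gt0 n_le_N; rewrite sum_rhc_size //.
have := divn_eq N n; have : (0 < N %/ n)%N by rewrite divn_gt0.
have : (N %% n < n)%N by rewrite ltn_mod.
move: (N %/ n)%N (N %% n)%N => [//|q] r r_lt_n _ ->.
have [s ->] : exists s, n = (r + s.+1)%N by exists (n - r).-1; lia.
have -> : (q.+1 * (r + s.+1) + r - (r + s.+1) = q * (r + s.+1) + r)%N by lia.
by rewrite addKn subn1 /=; ring.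
Qed.

Section FractionalPart.
Context {R : archiRealFieldType}.
Implicit Types x y : R.

Definition fract x : R := x - (Num.floor x)%:~R.

Lemma fract_ge0 x : 0 <= fract x.
Proof. by rewrite subr_ge0 floor_le. Qed.

Lemma fract_lt1 x : fract x < 1.
Proof. by rewrite ltrBlDl -[1]/(1%:~R) -intrD floorD1_gt. Qed.

Lemma fract_small x : 0 <= x < 1 -> fract x = x.
Proof. by move=> x01; rewrite /fract (@floor_def _ _ 0) ?subr0. Qed.

Lemma fract_intrD (m : int) x : fract (m%:~R + x) = fract x.
Proof.
by rewrite /fract floorDzr ?intr_int // intrKfloor intrD opprD addrACA subrr add0r.
Qed.

Lemma fract_natr_div (N n : nat) : (0 < n)%N ->
  fract (N%:R / n%:R) = (N %% n)%:R / n%:R.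
Proof.
move=> n_gt0; have n_neq0 : n%:R != 0 :> R by rewrite pnatr_eq0 -lt0n.
rewrite {1}(divn_eq N n) natrD natrM mulrDl mulfK // -[(N %/ n)%:R]/((N %/ n)%:Z%:~R).
rewrite fract_intrD fract_small // divr_ge0 //= ltr_pdivrMr ?ltr0n // mul1r.
by rewrite ltr_nat ltn_mod.
Qed.

Definition fract_var x : R := fract x * (1 - fract x).

Lemma fract_var_ge0 x : 0 <= fract_var x.
Proof. by rewrite mulr_ge0 ?fract_ge0 // subr_ge0 ltW ?fract_lt1. Qed.

Lemma fract_var_le1 x : fract_var x <= 1.
Proof. have := fract_ge0 x; have := fract_lt1 x; rewrite /fract_var; nra. Qed.

Lemma fract_var_lipschitz x y : `|fract_var x - fract_var y| <= `|x - y|.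
Proof.
wlog le_xy : x y / x <= y.
  move=> wlog_le; case: (leP x y) => [/wlog_le //|/ltW/wlog_le].
  by rewrite distrC [`|y - x|]distrC.
have /andP[fx_ge0 fx_lt1] : 0 <= fract x < 1 by rewrite fract_ge0 fract_lt1.
have /andP[fy_ge0 fy_lt1] : 0 <= fract y < 1 by rewrite fract_ge0 fract_lt1.
have yBx : y - x = (Num.floor y - Num.floor x)%:~R + fract y - fract x.
  by rewrite /fract intrB; ring.
have fy_ge_fx : 0 <= (Num.floor y - Num.floor x)%:~R + fract y - fract x.
  by rewrite -yBx subr_ge0.
rewrite (distrC x) [`|y - x|]ger0_norm ?subr_ge0 // yBx /fract_var ler_norml.
have [floor_eq|floor_neq] := eqVneq (Num.floor x) (Num.floor y).
  move: fy_ge_fx; rewrite floor_eq subrr add0r => fy_ge_fx.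
  by apply/andP; split; nra.
have : 1 <= (Num.floor y - Num.floor x)%:~R :> R.
  by rewrite ler1z lerBrDl lezD1 lt_neqAle floor_neq le_floor.
set d : R := (_ - _)%:~R in fy_ge_fx *; clearbody d => d_ge1.
by apply/andP; split; nra.
Qed.

Section Limits.
Context {T : Type} {F : set_system T} {FF : Filter F}.
Implicit Types f : T -> R.

Lemma cvg_fract_var f y :
  f @ F --> y -> fract_var (f t) @[t --> F] --> fract_var y.
Proof.
move=> /cvgrPdist_lt f_cvg; apply/cvgrPdist_lt => e e_gt0.
by near do apply: le_lt_trans (fract_var_lipschitz _ _) _; apply: f_cvg.
Unshelve. all: end_near.
Qed.

(* At [y = 0] the junk value [0^-1 = 0] is harmless: the factor [y ^+ 2] vanishes. *)
Lemma cvg_sqr_fract_var_inv f y : f @ F --> y ->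
  f t ^+ 2 * fract_var (f t)^-1 @[t --> F] --> y ^+ 2 * fract_var y^-1.
Proof.
move=> f_cvg; have sqr_cvg : f t ^+ 2 @[t --> F] --> y ^+ 2.
  by under eq_fun do rewrite expr2; rewrite expr2; apply: cvgM.
have [y0|y_neq0] := eqVneq y 0; last first.
  by apply: (cvgM sqr_cvg); apply: cvg_fract_var; exact: cvgV.
rewrite y0 expr0n /= in sqr_cvg *; rewrite mul0r.
apply: (squeeze_cvgr _ (cvg_cst 0) sqr_cvg); near=> t.
by rewrite mulr_ge0 ?sqr_ge0 ?fract_var_ge0 //= ler_piMr ?sqr_ge0 ?fract_var_le1.
Unshelve. all: end_near.
Qed.

End Limits.

End FractionalPart.

Lemma natr_mul_rhc_gamma (R : realType) (N n : nat) : (0 < n)%N -> (n < N)%N ->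
  let b : R := n%:R / N%:R in
  n%:R * rhc_gamma N n = (1 - b + b ^+ 2 * fract_var b^-1) / (1 - N%:R^-1).
Proof.
move=> n_gt0 n_lt_N b.
have n_le_N := ltnW n_lt_N.
rewrite /rhc_gamma -natr_sum mulrA -natrM muln_sum_rhc_size //.
rewrite /b invf_div /fract_var fract_natr_div //.
have r_le_n : (N %% n <= n)%N by rewrite ltnW // ltn_mod.
rewrite natrD !natrM !natrB //; last exact: leq_ltn_trans n_lt_N.
have n_neq0 : n%:R != 0 :> R by rewrite pnatr_eq0 -lt0n.
have N_neq0 : N%:R != 0 :> R by rewrite pnatr_eq0 -lt0n (leq_ltn_trans _ n_lt_N).
have N1_neq0 : N%:R - 1 != 0 :> R.
  by rewrite subr_eq0 pnatr_eq1; apply: contraTneq n_lt_N => ->; rewrite ltnS leqn0 -lt0n.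
by field; rewrite n_neq0 N_neq0 N1_neq0.
Qed.

Theorem lemma2 (R : realType) (N n : nat -> nat) (lambda : R)
  (hnN : forall nu, (n nu < N nu)%N)
  (hN : (fun nu => (N nu)%:R : R) @ \oo --> +oo)
  (hn : (fun nu => (n nu)%:R : R) @ \oo --> +oo)
  (hlam : (fun nu => (n nu)%:R / (N nu)%:R : R) @ \oo --> lambda)
  (hl0 : 0 <= lambda) (hl1 : lambda < 1) :
  exists c : R, 1 - lambda <= c /\
    (fun nu => (n nu)%:R * rhc_gamma (N nu) (n nu) : R) @ \oo --> c.
Proof.
pose b nu : R := (n nu)%:R / (N nu)%:R.
exists (1 - lambda + lambda ^+ 2 * fract_var lambda^-1); split.
  by rewrite lerDl mulr_ge0 ?sqr_ge0 ?fract_var_ge0.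
have num_cvg : 1 - b nu + b nu ^+ 2 * fract_var (b nu)^-1 @[nu --> \oo] -->
    1 - lambda + lambda ^+ 2 * fract_var lambda^-1.
  by apply: cvgD; [apply: cvgB => //; exact: cvg_cst | exact: cvg_sqr_fract_var_inv].
have invN_cvg : ((N nu)%:R : R)^-1 @[nu --> \oo] --> 0.
  by apply/gtr0_cvgV0 => //; near=> nu; rewrite ltr0n (leq_ltn_trans _ (hnN nu)).
have den_cvg : (1 - ((N nu)%:R : R)^-1)^-1 @[nu --> \oo] --> (1 : R).
  rewrite -[X in _ --> X]invr1; apply: cvgV; first exact: oner_neq0.
  by rewrite -[X in _ --> X]subr0; apply: cvgB => //; exact: cvg_cst.
rewrite -[X in _ --> X]mulr1; apply: cvg_trans (cvgM num_cvg den_cvg).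
have /cvgryPgt n_large := hn.
apply: near_eq_cvg; near=> nu; rewrite /= natr_mul_rhc_gamma //.
by rewrite -(ltr_nat R); near: nu; exact: n_large.
Unshelve. all: end_near.
Qed.
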